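(* Let $k\geqslant 1$ be an integer. The following $\mathbb{Z}_p$-Lie lattices (each on a basis $x_0,x_1,x_2$ with $[x_1,x_2]=0$) are self-similar of index $p^k$: (1) $L_6(a)$ for any $a\in\mathbb{Z}_p$, where $[x_0,x_1]=ax_1$, $[x_0,x_2]=ax_2$; (2) $L_2(s,r,c)$ with $s,r\in\mathbb{N}$, $c\in\mathbb{Z}_p$, $v_p(c)=1$, where $[x_0,x_1]=p^sx_1+p^{s+r}cx_2$, $[x_0,x_2]=p^{s+r}x_1+p^sx_2$; (3) $L_7(s,a,c)$ with $s\in\mathbb{N}$, $a,c\in\mathbb{Z}_p$, where $[x_0,x_1]=p^sax_1+p^scx_2$, $[x_0,x_2]=p^sx_1$, provided either $v_p(c)=1$ and $v_p(a)\geqslant 1$, or $v_p(4c+a^2)=1$, $v_p(a)=0$ and $v_p(c)=0$; (4) for $p\geqslant 3$, $L_7(s,0,1)$ with $s\in\mathbb{N}$.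
   Context: $p$ is a prime (arbitrary unless stated), $\mathbb{N}=\{0,1,2,\dots\}$, $v_p$ is the $p$-adic valuation. A $\mathbb{Z}_p$-Lie lattice is a $\mathbb{Z}_p$-Lie algebra whose underlying module is finitely generated and free. A virtual endomorphism of $L$ is a homomorphism of algebras $\varphi:M\to L$ with $M\subseteq L$ a finite-index subalgebra, of index $[L:M]$. An ideal $I$ of $L$ is $\varphi$-invariant if it lies in the domain of every power of $\varphi$ and $\varphi(I)\subseteq I$; $\varphi$ is simple if no non-zero ideal is $\varphi$-invariant. $L$ is self-similar of index $p^k$ if it has a simple virtual endomorphism of index $p^k$. *)

From mathcomp Require Import all_boot.
Set Implicit Arguments. Unset Strict Implicit. Unset Printing Implicit Defensive.

(* pm p = p for p > 0 (only used to keep the moduli p^n positive; p is prime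
   in the statement, so pm p = p). *)
Definition pm (p : nat) : nat := p.-1.+1.

Lemma pm_gt0 p n : 0 < pm p ^ n.
Proof. by rewrite expn_gt0. Qed.

Lemma pm_dvd p n : pm p ^ n %| pm p ^ n.+1.
Proof. exact: dvdn_exp2l. Qed.

(* An element of Z_p: x = (x_n)_n with x_n in {0,..,p^n-1} and
   x_{n+1} = x_n mod p^n. *)
Record Zp (p : nat) := MkZp {
  zseq : nat -> nat;
  zbound : forall n, zseq n < pm p ^ n;
  zcoh : forall n, zseq n.+1 %% pm p ^ n = zseq n }.

Section ZpOps.
Variable p : nat.
Local Notation q n := (pm p ^ n).

Definition zp_nat_seq (m : nat) (n : nat) := m %% q n.
Lemma zp_nat_bound m n : zp_nat_seq m n < q n.
Proof. by rewrite /zp_nat_seq ltn_pmod ?pm_gt0. Qed.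
Lemma zp_nat_coh m n : zp_nat_seq m n.+1 %% q n = zp_nat_seq m n.
Proof. by rewrite /zp_nat_seq (modn_dvdm _ (pm_dvd p n)). Qed.
Definition zp_of_nat (m : nat) : Zp p := MkZp (zp_nat_bound m) (zp_nat_coh m).

Definition zp_add_seq (x y : Zp p) n := (zseq x n + zseq y n) %% q n.
Lemma zp_add_bound x y n : zp_add_seq x y n < q n.
Proof. by rewrite /zp_add_seq ltn_pmod ?pm_gt0. Qed.
Lemma zp_add_coh x y n : zp_add_seq x y n.+1 %% q n = zp_add_seq x y n.
Proof.
by rewrite /zp_add_seq (modn_dvdm _ (pm_dvd p n)) // -modnDm !zcoh.
Qed.
Definition zp_add (x y : Zp p) : Zp p := MkZp (zp_add_bound x y) (zp_add_coh x y).

Definition zp_mul_seq (x y : Zp p) n := (zseq x n * zseq y n) %% q n.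
Lemma zp_mul_bound x y n : zp_mul_seq x y n < q n.
Proof. by rewrite /zp_mul_seq ltn_pmod ?pm_gt0. Qed.
Lemma zp_mul_coh x y n : zp_mul_seq x y n.+1 %% q n = zp_mul_seq x y n.
Proof.
by rewrite /zp_mul_seq (modn_dvdm _ (pm_dvd p n)) // -modnMm !zcoh.
Qed.
Definition zp_mul (x y : Zp p) : Zp p := MkZp (zp_mul_bound x y) (zp_mul_coh x y).

Definition zp_opp_seq (x : Zp p) n := (q n - zseq x n) %% q n.
Lemma zp_opp_bound x n : zp_opp_seq x n < q n.
Proof. by rewrite /zp_opp_seq ltn_pmod ?pm_gt0. Qed.
Lemma zp_opp_coh x n : zp_opp_seq x n.+1 %% q n = zp_opp_seq x n.
Proof.
rewrite /zp_opp_seq (modn_dvdm _ (pm_dvd p n)) //.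
apply/eqP; rewrite -(eqn_modDr (zseq x n.+1)).
rewrite subnK; last exact: ltnW (zbound x n.+1).
rewrite -modnDmr zcoh subnK; last exact: ltnW (zbound x n).
have /dvdnP [k ->] := pm_dvd p n.
by rewrite modnMl modnn.
Qed.
Definition zp_opp (x : Zp p) : Zp p := MkZp (zp_opp_bound x) (zp_opp_coh x).

Definition zp_sub (x y : Zp p) : Zp p := zp_add x (zp_opp y).

Definition zp_val_ge (x : Zp p) (m : nat) : Prop := zseq x m = 0.
(* v_p(x) = m  (with v_p(0) = +oo) *)
Definition zp_val_eq (x : Zp p) (m : nat) : Prop :=
  zp_val_ge x m /\ ~ zp_val_ge x m.+1.
End ZpOps.

Record vec3 (p : nat) := V3 { co0 : Zp p; co1 : Zp p; co2 : Zp p }.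

Section Vec.
Variable p : nat.
Definition v0 : vec3 p := V3 (zp_of_nat p 0) (zp_of_nat p 0) (zp_of_nat p 0).
Definition vadd (x y : vec3 p) : vec3 p :=
  V3 (zp_add (co0 x) (co0 y)) (zp_add (co1 x) (co1 y)) (zp_add (co2 x) (co2 y)).
Definition vscale (a : Zp p) (x : vec3 p) : vec3 p :=
  V3 (zp_mul a (co0 x)) (zp_mul a (co1 x)) (zp_mul a (co2 x)).

(* Structure constants of a lattice with [x1,x2] = 0:
   [x0,x1] = br01, [x0,x2] = br02. *)
Record lie3 := Lie3 { br01 : vec3 p; br02 : vec3 p }.

Definition bracket (L : lie3) (x y : vec3 p) : vec3 p :=
  vadd (vscale (zp_sub (zp_mul (co0 x) (co1 y)) (zp_mul (co1 x) (co0 y))) (br01 L))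
       (vscale (zp_sub (zp_mul (co0 x) (co2 y)) (zp_mul (co2 x) (co0 y))) (br02 L)).

Definition submodule (M : vec3 p -> Prop) : Prop :=
  [/\ M v0, (forall x y, M x -> M y -> M (vadd x y))
    & (forall a x, M x -> M (vscale a x))].

Definition subalgebra (L : lie3) (M : vec3 p -> Prop) : Prop :=
  submodule M /\ (forall x y, M x -> M y -> M (bracket L x y)).

Definition ideal (L : lie3) (I : vec3 p -> Prop) : Prop :=
  submodule I /\ (forall x y, I y -> I (bracket L x y)).

Definition has_index (M : vec3 p -> Prop) (n : nat) : Prop :=
  exists r : 'I_n -> vec3 p,
    (forall v, exists i m, M m /\ v = vadd (r i) m) /\
    (forall i j m, M m -> r i = vadd (r j) m -> i = j).

(* phi : M -> L is a homomorphism of Z_p-Lie algebras (phi is given as a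
   total function; only its values on M matter). *)
Definition lie_hom (L : lie3) (M : vec3 p -> Prop) (phi : vec3 p -> vec3 p) : Prop :=
  [/\ (forall x y, M x -> M y -> phi (vadd x y) = vadd (phi x) (phi y)),
      (forall a x, M x -> phi (vscale a x) = vscale a (phi x))
    & (forall x y, M x -> M y -> phi (bracket L x y) = bracket L (phi x) (phi y))].

Definition virtual_endo (L : lie3) (M : vec3 p -> Prop) (phi : vec3 p -> vec3 p) : Prop :=
  [/\ subalgebra L M, (exists n, has_index M n) & lie_hom L M phi].

Fixpoint pow_dom (M : vec3 p -> Prop) (phi : vec3 p -> vec3 p) (n : nat)
  (x : vec3 p) : Prop :=
  match n with
  | 0 => True
  | n.+1 => M x /\ pow_dom M phi n (phi x)
  end.

Definition invariant_ideal (L : lie3) (M : vec3 p -> Prop) (phi : vec3 p -> vec3 p)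
  (I : vec3 p -> Prop) : Prop :=
  [/\ ideal L I, (forall n x, I x -> pow_dom M phi n x)
    & (forall x, I x -> I (phi x))].

Definition simple_ve (L : lie3) (M : vec3 p -> Prop) (phi : vec3 p -> vec3 p) : Prop :=
  forall I, invariant_ideal L M phi I -> forall x, I x -> x = v0.

Definition self_similar (L : lie3) (k : nat) : Prop :=
  exists (M : vec3 p -> Prop) (phi : vec3 p -> vec3 p),
    [/\ virtual_endo L M phi, has_index M (p ^ k) & simple_ve L M phi].

Local Notation zp := (zp_of_nat p).
Local Notation O := (zp 0).
Definition L6 (a : Zp p) : lie3 := Lie3 (V3 O a O) (V3 O O a).
Definition L2 (s r : nat) (c : Zp p) : lie3 :=
  Lie3 (V3 O (zp (p ^ s)) (zp_mul (zp (p ^ (s + r))) c))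
       (V3 O (zp (p ^ (s + r))) (zp (p ^ s))).
Definition L7 (s : nat) (a c : Zp p) : lie3 :=
  Lie3 (V3 O (zp_mul (zp (p ^ s)) a) (zp_mul (zp (p ^ s)) c))
       (V3 O (zp (p ^ s)) O).
End Vec.

(* Each lattice is Z_p x0 ⋉ A with A = Z_p x1 ⊕ Z_p x2 abelian.  For k = e1 + e2 the
   domain of the virtual endomorphism is the image M of an injective linear map
   [emb e1 e2 b] scaling x1 by p^e1 and x2 by p^e2, composed with a shear of A
   (for the L7 cases with v_p(c) = 0); M has index p^k.  The endomorphism is
   phi = F ∘ emb^-1 for a linear F intertwining the brackets (F = id when k is even).
   It is simple because it contracts A p-adically: if x ∈ A and phi x, phi^2 x lie in
   p^m L, then x lies in p^(m+1) L.  So a phi-invariant ideal meets A only in 0; as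
   [x2, x] = -x0 [x0, x2] lies in that intersection, every element of the ideal has
   x0 = 0 and the ideal is 0.  For the abelian lattice L6(0), F permutes the coordinates
   cyclically and the contraction takes three steps. *)

From mathcomp Require Import all_boot zify.
From Stdlib Require Import Ring FunctionalExtensionality ProofIrrelevance Classical.
Set Implicit Arguments. Unset Strict Implicit. Unset Printing Implicit Defensive.

Section LieLattices.
Variable p : nat.
Hypothesis p_prime : prime p.

Local Notation q n := (pm p ^ n).
Local Notation Z := (Zp p).
Local Notation zp := (zp_of_nat p).
Local Notation O := (zp 0).
Local Notation I1 := (zp 1).
Local Notation "x +^ y" := (zp_add x y) (at level 50, left associativity).
Local Notation "x -^ y" := (zp_sub x y) (at level 50, left associativity).
Local Notation "x *^ y" := (zp_mul x y) (at level 40, left associativity).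
Local Notation "~^ x" := (zp_opp x) (at level 35, right associativity).
Local Notation vle n x := (zp_val_ge x n).

(** * Arithmetic in Z_p *)

Lemma pmE : pm p = p. Proof. by rewrite /pm prednK // prime_gt0. Qed.

Lemma zp_ext (x y : Z) : (forall n, zseq x n = zseq y n) -> x = y.
Proof.
case: x y => fx bx cx [fy by_ cy] /= /functional_extensionality eqf; subst fy.
by rewrite (proof_irrelevance _ bx by_) (proof_irrelevance _ cx cy).
Qed.

Lemma zseq_mod (x : Z) n : zseq x n %% q n = zseq x n.
Proof. by rewrite modn_small // zbound. Qed.

Lemma zp_ring : ring_theory O I1 (@zp_add p) (@zp_mul p) (@zp_sub p) (@zp_opp p) eq.
Proof.
split=> [x|x y|x y z|x|x y|x y z|x y z|x y|x]; apply: zp_ext => n /=.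
- by rewrite /zp_add_seq /= /zp_nat_seq mod0n add0n zseq_mod.
- by rewrite /zp_add_seq addnC.
- by rewrite /zp_add_seq /= modnDml modnDmr addnA.
- by rewrite /zp_mul_seq /= /zp_nat_seq modnMml mul1n zseq_mod.
- by rewrite /zp_mul_seq mulnC.
- by rewrite /zp_mul_seq /= modnMml modnMmr mulnA.
- by rewrite /zp_mul_seq /zp_add_seq /= modnMml modnDm mulnDl.
- by [].
- rewrite /zp_add_seq /zp_opp_seq /= /zp_nat_seq modnDmr subnKC ?modnn ?mod0n //.
  exact: ltnW (zbound x n).
Qed.

Add Ring zp_ring : zp_ring.

Lemma zp_natD m n : zp (m + n) = zp m +^ zp n.
Proof. by apply: zp_ext => i /=; rewrite /zp_add_seq /zp_nat_seq modnDm. Qed.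

Lemma zp_natM m n : zp (m * n) = zp m *^ zp n.
Proof. by apply: zp_ext => i /=; rewrite /zp_mul_seq /zp_nat_seq modnMm. Qed.

Lemma zp_nat2 : zp 2 = I1 +^ I1.
Proof. exact: (zp_natD 1 1). Qed.

Lemma zp_nat_odd n : odd n -> zp n = I1 +^ zp 2 *^ zp n./2.
Proof.
by move=> n_odd; rewrite -zp_natM -zp_natD mul2n -{1}(odd_double_half n) n_odd.
Qed.

Lemma zseq_mod_le (x : Z) m n : m <= n -> zseq x n %% q m = zseq x m.
Proof.
move=> /subnK <-; elim: (n - m) => [|d IH]; first by rewrite add0n zseq_mod.
have dvd_q : q m %| q (d + m) by apply: dvdn_exp2l; rewrite leq_addl.
by rewrite addSn -(modn_dvdm _ dvd_q) zcoh IH.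
Qed.

Lemma zp_val_ge0 (x : Z) : vle 0 x.
Proof. by have := zbound x 0; rewrite expn0 /zp_val_ge; case: (zseq x 0). Qed.

Lemma zp0_val_ge n : vle n O.
Proof. by rewrite /zp_val_ge /= /zp_nat_seq mod0n. Qed.

Lemma zp_val_ge_le (x : Z) m n : m <= n -> vle n x -> vle m x.
Proof. by rewrite /zp_val_ge => /zseq_mod_le <- ->; rewrite mod0n. Qed.

Lemma zp_val_ge_dvd (x : Z) m n : m <= n -> vle m x -> q m %| zseq x n.
Proof. by move=> /(zseq_mod_le x) eqx; rewrite /zp_val_ge -eqx => /eqP. Qed.

Lemma zp_val_geD (x y : Z) n : vle n x -> vle n y -> vle n (x +^ y).
Proof. by rewrite /zp_val_ge /= /zp_add_seq => -> ->; rewrite mod0n. Qed.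

Lemma zp_val_geN (x : Z) n : vle n x -> vle n (~^ x).
Proof. by rewrite /zp_val_ge /= /zp_opp_seq => ->; rewrite subn0 modnn. Qed.

Lemma zp_val_geB (x y : Z) n : vle n x -> vle n y -> vle n (x -^ y).
Proof. by move=> vx vy; apply: zp_val_geD => //; apply: zp_val_geN. Qed.

Lemma zp_val_geMl (x y : Z) n : vle n y -> vle n (x *^ y).
Proof. by rewrite /zp_val_ge /= /zp_mul_seq => ->; rewrite muln0 mod0n. Qed.

Lemma zp_val_ge_mulp (x : Z) n j m : vle n x -> m <= n + j -> vle m (zp (p ^ j) *^ x).
Proof.
move=> vx le_m; apply: zp_val_ge_le le_m _.
rewrite /zp_val_ge /= /zp_mul_seq /= /zp_nat_seq modnMml.
have := zp_val_ge_dvd (leq_addr j n) vx; rewrite pmE => /dvdnP [t ->].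
by rewrite mulnCA -expnD [j + n]addnC modnMl.
Qed.

Lemma zp_val_ge_pow j (x : Z) : vle j (zp (p ^ j) *^ x).
Proof. exact: zp_val_ge_mulp (zp_val_ge0 x) _. Qed.

Lemma zp_val_ge_unitK (g y : Z) n : ~ vle 1 g -> vle n (g *^ y) -> vle n y.
Proof.
case: n => [|n] g_unit; first by rewrite /zp_val_ge; case: (zseq y 0) (zbound y 0).
rewrite /zp_val_ge /= /zp_mul_seq => /eqP; rewrite -/(dvdn _ _) Gauss_dvdr.
  move=> /dvdnP [t eq_y]; move: (zbound y n.+1); rewrite eq_y.
  by case: t {eq_y} => [|t]; rewrite ?mul0n // mulSn ltnNge leq_addr.
rewrite pmE coprime_pexpl // prime_coprime //; apply/negP => /dvdnP [t eq_g].
apply: g_unit; rewrite /zp_val_ge -(zseq_mod_le g (isT : 1 <= n.+1)) eq_g.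
by rewrite expn1 pmE modnMl.
Qed.

Lemma zp_val_ge_all (x : Z) : (forall n, vle n x) -> x = O.
Proof. by move=> vx; apply: zp_ext => n; rewrite vx /= /zp_nat_seq mod0n. Qed.

Lemma zp_nat_unit n : ~~ (p %| n) -> ~ vle 1 (zp n).
Proof. by rewrite /zp_val_ge /= /zp_nat_seq pmE expn1 /dvdn => /negP nd /eqP. Qed.

Lemma zp_two_unit : odd p -> ~ vle 1 (zp 2).
Proof.
move=> p_odd; apply: zp_nat_unit; rewrite dvdn_prime2 //.
by apply/eqP=> p2; rewrite p2 in p_odd.
Qed.

Definition zp_divp_seq j (x : Z) n := zseq x (n + j) %/ q j.
Lemma zp_divp_bound j x n : zp_divp_seq j x n < q n.
Proof. by rewrite /zp_divp_seq ltn_divLR ?pm_gt0 // -expnD zbound. Qed.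
Lemma zp_divp_coh j x n : zp_divp_seq j x n.+1 %% q n = zp_divp_seq j x n.
Proof. by rewrite /zp_divp_seq modn_divl -expnD zseq_mod_le // addSn. Qed.
Definition zp_divp j (x : Z) : Z := MkZp (zp_divp_bound j x) (zp_divp_coh j x).

Lemma zp_divpK j (x : Z) : vle j x -> zp (p ^ j) *^ zp_divp j x = x.
Proof.
move=> vx; apply: zp_ext => n /=.
rewrite /zp_mul_seq /= /zp_divp_seq /zp_nat_seq modnMml.
have := zp_val_ge_dvd (leq_addl n j) vx.
by rewrite -(zseq_mod_le x (leq_addr j n)) !pmE => /divnK; rewrite mulnC => ->.
Qed.

Lemma zp_mulpK j (y : Z) : zp_divp j (zp (p ^ j) *^ y) = y.
Proof.
apply: zp_ext => n /=; rewrite /zp_divp_seq /= /zp_mul_seq /zp_nat_seq modnMml.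
rewrite -(zseq_mod_le y (leq_addr j n)) !pmE.
by rewrite [n + j]addnC expnD -muln_modr mulKn ?expn_gt0 ?prime_gt0.
Qed.

Lemma zp_val_ge_divp j (x : Z) n : vle (n + j) x -> vle n (zp_divp j x).
Proof. by rewrite /zp_val_ge /= /zp_divp_seq => ->; rewrite div0n. Qed.

Lemma zp_mul_eq0 (x y : Z) : x *^ y = O -> x = O \/ y = O.
Proof.
move=> xy0; case: (classic (y = O)) => [|y_nz]; [by right | left].
have [n0 yn0] : exists n, zseq y n != 0.
  apply: NNPP => all0; apply: y_nz; apply: zp_val_ge_all => n.
  by apply/eqP; apply: contraT => yn; case: all0; exists n.
case: (ex_minnP (ex_intro (fun n => zseq y n != 0) n0 yn0)) => n.
case: n => [|i] yn min_n; first by rewrite zp_val_ge0 in yn.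
have vy : vle i y.
  by apply/eqP; apply: contraT => /min_n; rewrite ltnn.
have unit_y : ~ vle 1 (zp_divp i y).
  by move=> /(zp_val_ge_mulp (j := i)) /(_ (leqnn _)); rewrite zp_divpK // => /eqP; apply/negP.
apply: zp_val_ge_all => N; apply: (zp_val_ge_unitK unit_y).
rewrite -(zp_mulpK i (zp_divp i y *^ x)); apply: zp_val_ge_divp.
have -> : zp (p ^ i) *^ (zp_divp i y *^ x) = x *^ y by rewrite -[in RHS](zp_divpK vy); ring.
by rewrite xy0; apply: zp0_val_ge.
Qed.

Lemma zp_pow_neq0 s : zp (p ^ s) <> O.
Proof.
move=> /(congr1 (fun x => zseq x s.+1)) /=; rewrite /zp_nat_seq pmE mod0n modn_small.
  by move=> /eqP; rewrite expn_eq0 => /andP [/eqP p0]; move: p_prime; rewrite p0.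
by rewrite ltn_exp2l ?prime_gt1.
Qed.

Lemma zp_val_eq1_mulp (c : Z) : zp_val_eq c 1 -> exists2 g, c = zp p *^ g & ~ vle 1 g.
Proof.
case=> c1 c2; exists (zp_divp 1 c); first by rewrite -{1}(zp_divpK c1) expn1.
by move=> /(zp_val_ge_mulp (j := 1)) /(_ (leqnn _)); rewrite zp_divpK.
Qed.

(** * Sublattices of index p^k *)

Lemma zseq_nat_small m n : m < p ^ n -> zseq (zp m) n = m.
Proof. by move=> lt_m; rewrite /= /zp_nat_seq pmE modn_small. Qed.

Lemma zp_val_ge_res (x : Z) n : vle n (x -^ zp (zseq x n)).
Proof.
rewrite /zp_val_ge /= /zp_add_seq /= /zp_opp_seq /= /zp_nat_seq zseq_mod.
by rewrite modnDmr subnKC ?modnn // ltnW ?zbound.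
Qed.

Lemma zseq_addr_val_ge (x y : Z) n : vle n y -> zseq (x +^ y) n = zseq x n.
Proof. by move=> vy; rewrite /= /zp_add_seq vy addn0 zseq_mod. Qed.

Local Notation V := (vec3 p).

Lemma v3_eq (x y : V) : co0 x = co0 y -> co1 x = co1 y -> co2 x = co2 y -> x = y.
Proof. by case: x y => ? ? ? [? ? ?] /= -> -> ->. Qed.

Lemma v3_inj (x y : V) : x = y -> [/\ co0 x = co0 y, co1 x = co1 y & co2 x = co2 y].
Proof. by move=> ->. Qed.

Ltac veq := apply: v3_eq => /=; ring.

Definition vval_ge m (x : V) := [/\ vle m (co0 x), vle m (co1 x) & vle m (co2 x)].

Lemma vval_ge_all (x : V) : (forall m, vval_ge m x) -> x = v0 p.
Proof.
by move=> vx; apply: v3_eq; apply: zp_val_ge_all => m; case: (vx m).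
Qed.

Definition box e1 e2 (x : V) := vle e1 (co1 x) /\ vle e2 (co2 x).

Lemma has_index_box e1 e2 : has_index (box e1 e2) (p ^ (e1 + e2)).
Proof.
set P1 := p ^ e1; set P2 := p ^ e2.
have P1_gt0 : 0 < P1 by rewrite expn_gt0 prime_gt0.
have P2_gt0 : 0 < P2 by rewrite expn_gt0 prime_gt0.
have P_eq : p ^ (e1 + e2) = P2 * P1 by rewrite expnD mulnC.
exists (fun i : 'I_(p ^ (e1 + e2)) => V3 O (zp (i %% P1)) (zp (i %/ P1))); split.
- move=> v; set z1 := zseq (co1 v) e1; set z2 := zseq (co2 v) e2.
  have z1_lt : z1 < P1 by have := zbound (co1 v) e1; rewrite pmE.
  have z2_lt : z2 < P2 by have := zbound (co2 v) e2; rewrite pmE.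
  have i_lt : z2 * P1 + z1 < p ^ (e1 + e2) by rewrite P_eq; nia.
  exists (Ordinal i_lt), (V3 (co0 v) (co1 v -^ zp z1) (co2 v -^ zp z2)).
  split; first by split; apply: zp_val_ge_res.
  by rewrite /= modnMDl modn_small // divnMDl // divn_small // addn0; veq.
- move=> i j m [m1 m2] eq_r.
  move: (congr1 (fun x => zseq (co1 x) e1) eq_r) (congr1 (fun x => zseq (co2 x) e2) eq_r).
  cbn [co1 co2 vadd].
  rewrite !zseq_addr_val_ge // !zseq_nat_small ?ltn_pmod ?ltn_divLR -?P_eq //.
  by move=> E1 E2; apply: val_inj; rewrite /= (divn_eq i P1) (divn_eq j P1) E1 E2.
Qed.

Lemma has_index_ext (M M' : V -> Prop) n :
  (forall x, M x <-> M' x) -> has_index M n -> has_index M' n.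
Proof.
move=> eqM [r [cover uniq_r]]; exists r; split=> [v|i j m /eqM]; last exact: uniq_r.
by have [i [m [/eqM Mm ->]]] := cover v; exists i, m.
Qed.

Lemma has_index_preim (M : V -> Prop) n (T T' : V -> V) :
  cancel T T' -> cancel T' T ->
  (forall x y, T (vadd x y) = vadd (T x) (T y)) ->
  (forall x y, T' (vadd x y) = vadd (T' x) (T' y)) ->
  has_index M n -> has_index (fun x => M (T x)) n.
Proof.
move=> TK T'K TD T'D [r [cover uniq_r]]; exists (fun i => T' (r i)); split.
- move=> v; have [i [m [Mm eq_v]]] := cover (T v).
  by exists i, (T' m); rewrite T'K -T'D -eq_v TK.
- by move=> i j m Mm eq_r; apply: (uniq_r _ _ (T m)); rewrite // -[r i]T'K eq_r TD T'K.
Qed.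

Definition shear (b : Z) (x : V) := V3 (co0 x) (co1 x) (co2 x -^ b *^ co1 x).

Definition emb e1 e2 (b : Z) (y : V) :=
  V3 (co0 y) (zp (p ^ e1) *^ co1 y) (b *^ (zp (p ^ e1) *^ co1 y) +^ zp (p ^ e2) *^ co2 y).

Definition unemb e1 e2 (b : Z) (x : V) :=
  V3 (co0 x) (zp_divp e1 (co1 x)) (zp_divp e2 (co2 x -^ b *^ co1 x)).

Definition emb_image e1 e2 (b : Z) (x : V) := exists y, x = emb e1 e2 b y.

Lemma unembK e1 e2 b : cancel (emb e1 e2 b) (unemb e1 e2 b).
Proof.
move=> y; apply: v3_eq => /=; rewrite ?zp_mulpK //.
by rewrite (_ : _ -^ _ = zp (p ^ e2) *^ co2 y) ?zp_mulpK //; ring.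
Qed.

Lemma emb_imageP e1 e2 b x : emb_image e1 e2 b x <-> box e1 e2 (shear b x).
Proof.
split=> [[y ->]|[v1 v2]].
  split=> /=; first exact: zp_val_ge_pow.
  by rewrite (_ : _ -^ _ = zp (p ^ e2) *^ co2 y); [apply: zp_val_ge_pow | ring].
by exists (unemb e1 e2 b x); apply: v3_eq => //=; rewrite !zp_divpK //; ring.
Qed.

Lemma has_index_emb_image e1 e2 b : has_index (emb_image e1 e2 b) (p ^ (e1 + e2)).
Proof.
apply: (has_index_ext (M := fun x => box e1 e2 (shear b x))).
  by move=> x; split=> /emb_imageP.
apply: (has_index_preim (T' := shear (~^ b))); last exact: has_index_box.
1,2: by move=> x; veq.
all: by move=> x y; veq.
Qed.

Lemma vval_ge_emb e1 e2 {b : Z} m n1 n2 (y : V) :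
  vle m (co0 y) -> vle n1 (co1 y) -> vle n2 (co2 y) -> m <= n1 + e1 -> m <= n2 + e2 ->
  vval_ge m (emb e1 e2 b y).
Proof.
move=> vy0 vy1 vy2 le1 le2; split=> //=; first exact: zp_val_ge_mulp vy1 le1.
apply: zp_val_geD; last exact: zp_val_ge_mulp vy2 le2.
by apply: zp_val_geMl; apply: zp_val_ge_mulp vy1 le1.
Qed.

(** * Simplicity by p-adic contraction *)

Lemma bracket_x2 (L : lie3 p) x : bracket L (V3 O O I1) x = vscale (~^ co0 x) (br02 L).
Proof. by veq. Qed.

Lemma bracket_x2_eq0 (L : lie3 p) x :
  br02 L <> v0 p -> bracket L (V3 O O I1) x = v0 p -> co0 x = O.
Proof.
rewrite bracket_x2 => br02_nz eq0; apply: NNPP => x0_nz; apply: br02_nz.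
have nx0 : ~^ co0 x <> O.
  by move=> nx; apply: x0_nz; transitivity (~^ ~^ co0 x); [ring | rewrite nx; ring].
apply: v3_eq; [move: (congr1 (@co0 p) eq0) | move: (congr1 (@co1 p) eq0)
              | move: (congr1 (@co2 p) eq0)] => /= /zp_mul_eq0 [] //.
Qed.

Lemma simple_ve_of_contraction (L : lie3 p) (M : V -> Prop) (phi : V -> V) (A : V -> Prop) :
  (forall x, M x -> A x -> A (phi x)) ->
  (forall m (S : V -> Prop), (forall x, S x -> [/\ M x, A x & S (phi x)]) ->
     (forall x, S x -> vval_ge m x) -> forall x, S x -> vval_ge m.+1 x) ->
  (exists e, (forall x, A (bracket L e x)) /\ (forall x, bracket L e x = v0 p -> A x)) ->
  simple_ve L M phi.
Proof.
move=> A_phi contr [e [A_br br0_A]] I [[_ I_br] I_dom I_phi].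
pose S x := I x /\ A x.
have S_stable x : S x -> [/\ M x, A x & S (phi x)].
  by case=> Ix Ax; have [Mx _] := I_dom 1 x Ix; split=> //; split; auto.
have S_val m x : S x -> vval_ge m x.
  elim: m x => [|m IH] x Sx; last exact: contr S_stable IH x Sx.
  by split; apply: zp_val_ge0.
have S0 x : S x -> x = v0 p by move=> Sx; apply: vval_ge_all => m; apply: S_val.
move=> x Ix; apply: (S0 x); split=> //; apply: br0_A; apply: S0.
by split; [apply: I_br | apply: A_br].
Qed.

Definition vlinear (F : V -> V) :=
  (forall x y, F (vadd x y) = vadd (F x) (F y)) /\
  (forall a x, F (vscale a x) = vscale a (F x)).

Section EmbeddingCriterion.
Variables (L : lie3 p) (e1 e2 : nat) (b : Z) (F : V -> V).
Local Notation E := (emb e1 e2 b).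
Local Notation M := (emb_image e1 e2 b).
Local Notation phi := (fun x => F (unemb e1 e2 b x)).

Lemma embD : {morph E : y y' / vadd y y'}.
Proof. by move=> y y'; veq. Qed.

Lemma embZ a : {morph E : y / vscale a y}.
Proof. by move=> y; veq. Qed.

Hypothesis F_linear : vlinear F.
Hypothesis bracket_emb : forall y y',
  exists2 w, bracket L (E y) (E y') = E w & F w = bracket L (F y) (F y').

Lemma virtual_endo_emb : virtual_endo L M phi.
Proof.
case: F_linear => FD FZ; split; last first.
- split=> [_ _ [y ->] [y' ->] | a _ [y ->] | _ _ [y ->] [y' ->]].
  + by rewrite -embD !unembK FD.
  + by rewrite -embZ !unembK FZ.
  + by have [w -> Fw] := bracket_emb y y'; rewrite !unembK.
- by exists (p ^ (e1 + e2)); apply: has_index_emb_image.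
split; last by move=> _ _ [y ->] [y' ->]; have [w -> _] := bracket_emb y y'; exists w.
split=> [|_ _ [y ->] [y' ->]|a _ [y ->]].
- by exists (v0 p); veq.
- by exists (vadd y y'); rewrite embD.
- by exists (vscale a y); rewrite embZ.
Qed.

Lemma self_similar_emb : simple_ve L M phi -> self_similar L (e1 + e2).
Proof.
by exists M, phi; split; [apply: virtual_endo_emb | apply: has_index_emb_image |].
Qed.

Lemma simple_emb :
  co0 (br01 L) = O -> co0 (br02 L) = O -> br02 L <> v0 p ->
  (forall y, co0 y = O -> co0 (F y) = O) ->
  (forall m y z, co0 y = O -> F y = E z ->
     vval_ge m (F y) -> vval_ge m (F z) -> vval_ge m.+1 (E y)) ->
  simple_ve L M phi.
Proof.
move=> br01_0 br02_0 br02_nz F0 contr.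
apply: (simple_ve_of_contraction (A := fun x => co0 x = O)).
- by move=> _ [y ->] y0; rewrite unembK; apply: F0.
- move=> m S S_stable S_val _ /[dup] /S_stable [[y ->] y0 SFy] _.
  rewrite unembK in SFy; have [[z Fy] _ SFz] := S_stable _ SFy.
  rewrite Fy unembK in SFz.
  exact: (contr m y z y0 Fy (S_val _ SFy) (S_val _ SFz)).
- exists (V3 O O I1); split=> x; last exact: bracket_x2_eq0.
  by rewrite /= br01_0 br02_0; ring.
Qed.

Lemma self_similar_emb_contraction :
  co0 (br01 L) = O -> co0 (br02 L) = O -> br02 L <> v0 p ->
  (forall y, co0 y = O -> co0 (F y) = O) ->
  (forall m y z, co0 y = O -> F y = E z ->
     vval_ge m (F y) -> vval_ge m (F z) -> vval_ge m.+1 (E y)) ->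
  self_similar L (e1 + e2).
Proof. by move=> *; apply: self_similar_emb; apply: simple_emb. Qed.

End EmbeddingCriterion.

(** * The lattices L6, L2 and L7 *)

Lemma br02_L2_neq0 s r (c : Z) : br02 (L2 s r c) <> v0 p.
Proof. by move=> /(congr1 (@co2 p)); apply: zp_pow_neq0. Qed.

Lemma br02_L7_neq0 s (a c : Z) : br02 (L7 s a c) <> v0 p.
Proof. by move=> /(congr1 (@co1 p)); apply: zp_pow_neq0. Qed.

Lemma self_similar_even (L : lie3 p) j : 0 < j ->
  co0 (br01 L) = O -> co0 (br02 L) = O -> br02 L <> v0 p -> self_similar L (j + j).
Proof.
move=> j_gt0 br01_0 br02_0 br02_nz.
apply: (self_similar_emb_contraction (b := O) (F := id)) => //.
  move=> y y'; exists (bracket L y y') => //.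
  by apply: v3_eq => /=; rewrite ?br01_0 ?br02_0; ring.
move=> m y z y0 _ [_ vy1 vy2] _.
by apply: vval_ge_emb vy1 vy2 _ _; [rewrite y0; apply: zp0_val_ge | lia | lia].
Qed.

Lemma self_similar_L6 (a : Z) k : 0 < k -> a <> O -> self_similar (L6 a) k.
Proof.
move=> k_gt0 a_nz; rewrite -[k]add0n.
apply: (self_similar_emb_contraction (b := O) (F := fun y => V3 (co0 y) (co2 y) (co1 y))) => //.
- by move=> y y'; exists (bracket (L6 a) y y'); veq.
- by move=> /(congr1 (@co2 p)); apply: a_nz.
move=> m y z y0 [_ ez1 ez2] [_ vy2 vy1] [_ vz2 _].
have vy1' : vle (m + k) (co1 y).
  by rewrite ez2 (_ : _ +^ _ = zp (p ^ k) *^ co2 z); [apply: zp_val_ge_mulp vz2 _ | ring].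
by apply: vval_ge_emb vy1' vy2 _ _; [rewrite y0; apply: zp0_val_ge | lia | lia].
Qed.

Lemma self_similar_L6_0 k : 0 < k -> self_similar (L6 O) k.
Proof.
move=> k_gt0; rewrite -[k]add0n.
apply: (self_similar_emb (b := O) (F := fun y => V3 (co2 y) (co0 y) (co1 y))).
- by split=> [x y|c x]; veq.
- by exists (v0 p); veq.
apply: (simple_ve_of_contraction (A := fun _ => True)) => //; last by exists (v0 p).
move=> m S S_stable S_val _ /[dup] /S_stable [[y ->] _ SFy] _.
rewrite unembK in SFy; have [[z Fy] _ SFz] := S_stable _ SFy.
rewrite Fy unembK in SFz; have [[w Fz] _ SFw] := S_stable _ SFz.
rewrite Fz unembK in SFw; have [vw2 vw0 vw1] := S_val _ SFw.
case: Fy Fz => y2E y0E y1E [z2E z0E z1E]; rewrite expn0 in y0E z0E.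
have y0P : co0 y = zp (p ^ k) *^ co2 w by rewrite y0E z1E; ring.
have y1P : co1 y = zp (p ^ k) *^ co0 w by rewrite y1E z2E; ring.
have y2P : co2 y = co1 w by rewrite y2E z0E; ring.
apply: (vval_ge_emb (n1 := m + k) (n2 := m)); rewrite ?y0P ?y1P ?y2P //; try lia.
- by apply: zp_val_ge_mulp vw2 _; lia.
- exact: zp_val_ge_mulp vw0 (leqnn _).
Qed.

Definition companion (al g : Z) (y : V) := V3 (co0 y) (al *^ co1 y +^ co2 y) (g *^ co1 y).

Lemma companion_contraction i al g m (y z : V) : ~ vle 1 g -> co0 y = O ->
  companion al g y = emb i i.+1 O z ->
  vval_ge m (companion al g y) -> vval_ge m (companion al g z) ->
  vval_ge m.+1 (emb i i.+1 O y).
Proof.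
move=> g_unit y0 /v3_inj [_ _ /= ez2] [_ vFy1 _] [_ vFz1 vFz2].
have vz1 : vle m (co1 z) by apply: zp_val_ge_unitK vFz2.
have vz2 : vle m (co2 z).
  rewrite (_ : co2 z = al *^ co1 z +^ co2 z -^ al *^ co1 z); last by ring.
  by apply: zp_val_geB vFz1 (zp_val_geMl _ vz1).
have vy1 : vle (m + i.+1) (co1 y).
  apply: (zp_val_ge_unitK g_unit).
  by rewrite ez2 (_ : _ +^ _ = zp (p ^ i.+1) *^ co2 z); [apply: zp_val_ge_mulp vz2 _ | ring].
have vy2 : vle m (co2 y).
  rewrite (_ : co2 y = al *^ co1 y +^ co2 y -^ al *^ co1 y); last by ring.
  by apply: zp_val_geB vFy1 (zp_val_geMl _ (zp_val_ge_le _ vy1)); rewrite leq_addr.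
by apply: vval_ge_emb vy1 vy2 _ _; [rewrite y0; apply: zp0_val_ge | lia | lia].
Qed.

Lemma self_similar_L2_odd s r (c : Z) i : zp_val_eq c 1 -> self_similar (L2 s r c) (i + i.+1).
Proof.
case/zp_val_eq1_mulp => g -> g_unit.
apply: (self_similar_emb_contraction (b := O) (F := companion O g)) => //.
- by split=> [x y|a x]; veq.
- move=> y y'; set t1 := co0 y *^ co1 y' -^ co1 y *^ co0 y'.
  set t2 := co0 y *^ co2 y' -^ co2 y *^ co0 y'.
  exists (V3 O (t1 *^ zp (p ^ s) +^ zp p *^ t2 *^ zp (p ^ (s + r)))
               (t1 *^ zp (p ^ (s + r)) *^ g +^ t2 *^ zp (p ^ s)));
  by apply: v3_eq; rewrite /= ?expnSr ?zp_natM /t1 /t2; ring.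
- exact: br02_L2_neq0.
- by move=> m y z y0; apply: companion_contraction.
Qed.

Lemma self_similar_L7_odd s (a c : Z) i :
  zp_val_eq c 1 -> vle 1 a -> self_similar (L7 s a c) (i + i.+1).
Proof.
case/zp_val_eq1_mulp => g -> g_unit /zp_divpK; rewrite expn1 => <-.
set al := zp_divp 1 a.
apply: (self_similar_emb_contraction (b := O) (F := companion al g)) => //.
- by split=> [x y|a' x]; veq.
- move=> y y'; set t1 := co0 y *^ co1 y' -^ co1 y *^ co0 y'.
  set t2 := co0 y *^ co2 y' -^ co2 y *^ co0 y'.
  exists (V3 O (zp (p ^ s) *^ (zp p *^ al *^ t1 +^ zp p *^ t2)) (zp (p ^ s) *^ g *^ t1));
  by apply: v3_eq; rewrite /= ?expnSr ?zp_natM /t1 /t2; ring.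
- exact: br02_L7_neq0.
- by move=> m y z y0; apply: companion_contraction.
Qed.

Definition tracefree (a e : Z) (y : V) :=
  V3 (co0 y) (a *^ co1 y +^ zp 2 *^ co2 y) (e *^ co1 y -^ a *^ co2 y).

Lemma tracefree_contraction i (a e h : Z) m (y z : V) :
  zp p = I1 +^ zp 2 *^ h -> ~ vle 1 (zp 2) -> ~ vle 1 (a *^ a +^ zp 2 *^ e) -> co0 y = O ->
  tracefree a e y = emb i i.+1 (h *^ a) z ->
  vval_ge m (tracefree a e y) -> vval_ge m (tracefree a e z) ->
  vval_ge m.+1 (emb i i.+1 (h *^ a) y).
Proof.
move=> pE two_unit det_unit y0 /v3_inj [_ /= ez1 ez2] [_ vFy1 _] [_ vFz1 _].
have vy1 : vle (m + i.+1) (co1 y).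
  apply: (zp_val_ge_unitK det_unit).
  (* [tracefree a e] squares to [a^2 + 2e] on A, and [a + 2 h a = p a]. *)
  have -> : (a *^ a +^ zp 2 *^ e) *^ co1 y =
            zp (p ^ i.+1) *^ (a *^ co1 z +^ zp 2 *^ co2 z).
    transitivity (a *^ (a *^ co1 y +^ zp 2 *^ co2 y) +^ zp 2 *^ (e *^ co1 y -^ a *^ co2 y)).
      by ring.
    by rewrite ez1 ez2 expnSr zp_natM pE; ring.
  exact: zp_val_ge_mulp vFz1 (leqnn _).
have vy2 : vle m (co2 y).
  apply: (zp_val_ge_unitK two_unit).
  rewrite (_ : zp 2 *^ co2 y = a *^ co1 y +^ zp 2 *^ co2 y -^ a *^ co1 y); last by ring.
  by apply: zp_val_geB vFy1 (zp_val_geMl _ (zp_val_ge_le _ vy1)); rewrite leq_addr.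
by apply: vval_ge_emb vy1 vy2 _ _; [rewrite y0; apply: zp0_val_ge | lia | lia].
Qed.

Lemma self_similar_L7_sheared s (a g h : Z) i :
  zp p = I1 +^ zp 2 *^ h -> ~ vle 1 (zp 2) ->
  ~ vle 1 (a *^ a +^ zp 2 *^ (zp 2 *^ g +^ a *^ (h *^ a))) ->
  self_similar (L7 s a (zp p *^ g +^ h *^ a *^ (a +^ h *^ a))) (i + i.+1).
Proof.
move=> pE two_unit det_unit.
apply: (self_similar_emb_contraction (b := h *^ a)
          (F := tracefree a (zp 2 *^ g +^ a *^ (h *^ a)))) => //.
- by split=> [x y|a' x]; veq.
- move=> y y'; set t1 := co0 y *^ co1 y' -^ co1 y *^ co0 y'.
  set t2 := co0 y *^ co2 y' -^ co2 y *^ co0 y'.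
  exists (V3 O (zp (p ^ s) *^ (a *^ t1 +^ h *^ a *^ t1 +^ zp p *^ t2))
               (zp (p ^ s) *^ (g *^ t1 -^ h *^ a *^ t2)));
  by apply: v3_eq; rewrite /= ?expnSr ?zp_natM /t1 /t2 ?pE ?zp_nat2; ring.
- exact: br02_L7_neq0.
- by move=> m y z y0; apply: tracefree_contraction.
Qed.

Lemma self_similar_L7_unit s (a c : Z) i :
  zp_val_eq (zp 4 *^ c +^ a *^ a) 1 -> ~ vle 1 a -> self_similar (L7 s a c) (i + i.+1).
Proof.
move=> [d1 d2] a_unit.
have p_odd : odd p.
  case: (even_prime p_prime) => // p2.
  have vc4 : vle 1 (zp 4 *^ c).
    have -> : zp 4 = zp (p * 2) by congr (zp_of_nat p _); rewrite p2.
    by rewrite zp_natM (_ : _ *^ _ *^ c = zp p *^ (zp 2 *^ c)); [apply: (zp_val_ge_pow 1) | ring].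
  exfalso; apply: (a_unit); apply: (zp_val_ge_unitK a_unit).
  rewrite (_ : a *^ a = zp 4 *^ c +^ a *^ a -^ zp 4 *^ c); last by ring.
  exact: zp_val_geB d1 vc4.
have pE := zp_nat_odd p_odd; set h := zp p./2 in pE.
(* As 2 h = p - 1, modulo p we have h a = -a/2 and c = -a^2/4 = h a (a + h a). *)
have two_unit := zp_two_unit p_odd.
have four_unit : ~ vle 1 (zp 4) by rewrite (zp_natM 2 2) => /(zp_val_ge_unitK two_unit).
have vX : vle 1 (c -^ h *^ a *^ (a +^ h *^ a)).
  apply: (zp_val_ge_unitK four_unit).
  rewrite (_ : zp 4 *^ _ = zp 4 *^ c +^ a *^ a -^ zp (p ^ 1) *^ (zp p *^ a *^ a)).
    exact: zp_val_geB d1 (zp_val_ge_pow _ _).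
  by rewrite expn1 (zp_natM 2 2) pE zp_nat2; ring.
have [g cE] : exists g, c = zp p *^ g +^ h *^ a *^ (a +^ h *^ a).
  exists (zp_divp 1 (c -^ h *^ a *^ (a +^ h *^ a))).
  by have := zp_divpK vX; rewrite expn1 => ->; ring.
subst c; apply: self_similar_L7_sheared => // vdet; apply: d2.
rewrite (_ : _ +^ _ = zp (p ^ 1) *^ (a *^ a +^ zp 2 *^ (zp 2 *^ g +^ a *^ (h *^ a)))).
  exact: zp_val_ge_mulp vdet _.
by rewrite expn1 (zp_natM 2 2) pE zp_nat2; ring.
Qed.

Lemma self_similar_L7_01 s k : odd p -> 0 < k -> self_similar (L7 s O I1) k.
Proof.
move=> p_odd k_gt0; rewrite -[k]add0n.
have two_unit := zp_two_unit p_odd.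
have KE : zp (p ^ k) = I1 +^ zp 2 *^ zp (p ^ k)./2.
  by apply: zp_nat_odd; rewrite oddX p_odd orbT.
set H := zp (p ^ k)./2 in KE.
apply: (self_similar_emb_contraction (b := I1)
          (F := fun y => V3 (~^ co0 y) (co1 y +^ H *^ co2 y)
                            (~^ (co1 y +^ (H +^ I1) *^ co2 y)))) => //.
- by split=> [x y|a x]; veq.
- move=> y y'; set t1 := co0 y *^ co1 y' -^ co1 y *^ co0 y'.
  set t2 := co0 y *^ co2 y' -^ co2 y *^ co0 y'.
  exists (V3 O (zp (p ^ s) *^ (t1 +^ zp (p ^ k) *^ t2)) (~^ (zp (p ^ s) *^ t2)));
  by apply: v3_eq; rewrite /= ?expn0 /t1 /t2 ?KE ?zp_nat2; ring.
- exact: br02_L7_neq0.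
- by move=> y /= ->; ring.
move=> m y z y0 /v3_inj [_ /= ez1 ez2] [_ vFy1 vFy2] [_ vFz1 vFz2].
have vy2 : vle m (co2 y).
  rewrite (_ : co2 y = ~^ ~^ (co1 y +^ (H +^ I1) *^ co2 y) -^ (co1 y +^ H *^ co2 y)); last by ring.
  exact: zp_val_geB (zp_val_geN vFy2) vFy1.
have vz2 : vle m (co2 z).
  rewrite (_ : co2 z = ~^ ~^ (co1 z +^ (H +^ I1) *^ co2 z) -^ (co1 z +^ H *^ co2 z)); last by ring.
  exact: zp_val_geB (zp_val_geN vFz2) vFz1.
have vy1 : vle (m + k) (co1 y).
  apply: (zp_val_ge_unitK two_unit).
  rewrite (_ : zp 2 *^ co1 y = ~^ (zp (p ^ k) *^ (co2 y +^ co2 z))).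
    exact: zp_val_geN (zp_val_ge_mulp (zp_val_geD vy2 vz2) (leqnn _)).
  move: ez1 ez2; rewrite expn0 => ez1 ez2.
  transitivity (~^ (~^ (co1 y +^ (H +^ I1) *^ co2 y) -^ (co1 y +^ H *^ co2 y)
                   +^ zp (p ^ k) *^ co2 y)); first by rewrite KE zp_nat2; ring.
  by rewrite ez1 ez2; ring.
by apply: vval_ge_emb vy1 vy2 _ _; [rewrite y0; apply: zp0_val_ge | lia | lia].
Qed.

End LieLattices.

Lemma pos_even_or_odd k : 0 < k -> (exists2 j, 0 < j & k = j + j) \/ exists i, k = i + i.+1.
Proof.
move=> k_gt0; have := odd_double_half k; rewrite -addnn.
by case: (odd k) => /= kE; [right; exists k./2 | left; exists k./2]; lia.
Qed.

Theorem lemma1p9 (p : nat) (hp : prime p) (k : nat) (hk : 1 <= k) :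
  [/\ (forall a : Zp p, self_similar (L6 a) k),
      (forall (s r : nat) (c : Zp p), zp_val_eq c 1 -> self_similar (L2 s r c) k),
      (forall (s : nat) (a c : Zp p),
          (zp_val_eq c 1 /\ zp_val_ge a 1) \/
          [/\ zp_val_eq (zp_add (zp_mul (zp_of_nat p 4) c) (zp_mul a a)) 1,
              zp_val_eq a 0 & zp_val_eq c 0] ->
          self_similar (L7 s a c) k)
    & (3 <= p -> forall s : nat, self_similar (L7 s (zp_of_nat p 0) (zp_of_nat p 1)) k)].
Proof.
split.
- move=> a; case: (classic (a = zp_of_nat p 0)) => [->|a_nz].
    exact: self_similar_L6_0.
  exact: self_similar_L6.
- move=> s r c c_val; case: (pos_even_or_odd hk) => [[j j_gt0 ->]|[i ->]].
    by apply: self_similar_even => //; apply: br02_L2_neq0.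
  exact: self_similar_L2_odd.
- move=> s a c cases; case: (pos_even_or_odd hk) => [[j j_gt0 ->]|[i ->]].
    by apply: self_similar_even => //; apply: br02_L7_neq0.
  case: cases => [[c_val a_val] | [d_val [_ a_unit] _]].
    exact: self_similar_L7_odd.
  exact: self_similar_L7_unit.
- move=> p_ge3 s; apply: self_similar_L7_01 => //.
  by case: (even_prime hp) => // p2; rewrite p2 in p_ge3.
Qed.
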